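(* For any integers $i\ge1$ and $w\ge0$ and every $j\in\{0,\dots,w\}$, it holds that $\mathcal{P}_i[j]=\max_{a+b=j,\ a,b\ge0}\big(\mathcal{P}_{i-1}[a]+\mathcal{P}_{i-1}[b]\big)$; that is, $\mathcal{P}_i[0..w]$ coincides with the first $w+1$ entries of the $(\max,+)$-convolution of $\mathcal{P}_{i-1}[0..w]$ with itself.
   Context: Fix an \textsc{Unbounded Knapsack} instance: items $(p_1,w_1),\dots,(p_n,w_n)$ with $p_k,w_k\in\mathbb{N}$ and capacity $W$. For $x\in\mathbb{N}^n$: $p(x)=\sum_kp_kx_k$, $w(x)=\sum_kw_kx_k$, $\|x\|_1=\sum_kx_k$. For an integer $i\ge0$ and $j\ge0$, $\mathcal{P}_i[j]:=\max\{p(x): x\in\mathbb{N}^n,\ w(x)\le j,\ \|x\|_1\le2^i\}$. The $(\max,+)$-convolution of $A[0..n],B[0..n]$ is $C[k]=\max_{i+j=k}A[i]+B[j]$. *)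

From mathcomp Require Import all_boot all_order.
Set Implicit Arguments. Unset Strict Implicit. Unset Printing Implicit Defensive.

Definition profit n (p : 'I_n -> nat) (x : 'I_n -> nat) := \sum_(k < n) p k * x k.
Definition weight n (w : 'I_n -> nat) (x : 'I_n -> nat) := \sum_(k < n) w k * x k.
Definition norm1 n (x : 'I_n -> nat) := \sum_(k < n) x k.

(* P_i[j] = max { p(x) : x in N^n, w(x) <= j, ||x||_1 <= 2^i }.
   Any such x has all entries <= 2^i, so the max ranges over the finite type
   {ffun 'I_n -> 'I_(2^i).+1}; the feasible set is nonempty (x = 0), so the
   max (with bottom 0) is the genuine maximum. *)
Definition Ptab n (p w : 'I_n -> nat) (i j : nat) : nat :=
  \max_(x : {ffun 'I_n -> 'I_(2 ^ i).+1} |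
          (weight w (fun k => x k) <= j) && (norm1 (fun k => x k) <= 2 ^ i))
     profit p (fun k => x k).

From mathcomp Require Import all_boot all_order.
Set Implicit Arguments. Unset Strict Implicit. Unset Printing Implicit Defensive.

(* A vector of 1-norm at most 2^(i+1) splits into two vectors of 1-norm at
   most 2^i (cut it at a sub-vector of norm min(|x|, 2^i)); weight and profit
   are additive, so an optimum for P_(i+1)[j] is the sum of solutions feasible
   for P_i[a] and P_i[j-a] with a the weight of the first part.  Conversely
   the sum of optimal solutions for P_i[a] and P_i[b] is feasible for
   P_(i+1)[a+b]. *)

Section Knapsack.
Variables (n : nat) (p w : 'I_n -> nat).

Lemma profitD (x y : 'I_n -> nat) :
  profit p (fun k => x k + y k) = profit p x + profit p y.
Proof. by rewrite /profit -big_split; apply: eq_bigr => k _; rewrite mulnDr. Qed.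

Lemma weightD (x y : 'I_n -> nat) :
  weight w (fun k => x k + y k) = weight w x + weight w y.
Proof. by rewrite /weight -big_split; apply: eq_bigr => k _; rewrite mulnDr. Qed.

Lemma norm1D (x y : 'I_n -> nat) :
  norm1 (fun k => x k + y k) = norm1 x + norm1 y.
Proof. exact: big_split. Qed.

Lemma sub_vector_norm1 (x : 'I_n -> nat) m : m <= norm1 x ->
  exists2 y : 'I_n -> nat, (forall k, y k <= x k) & norm1 y = m.
Proof.
elim: m => [|m IHm] ltm.
  by exists (fun => 0) => //; rewrite /norm1 big1.
have [y yx ym] := IHm (ltnW ltm).
have /existsP[k ykx] : [exists k, y k < x k].
  apply: contraLR ltm; rewrite negb_exists -leqNgt -ym => /forallP xy.
  by apply: leq_sum => k _; rewrite leqNgt xy.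
exists (fun l => y l + (l == k)).
  by move=> l; case: eqP => [->|_]; rewrite ?addn1 ?addn0.
rewrite norm1D ym /norm1 (bigD1 k) //= eqxx big1 => [|l /negPf -> //].
by rewrite addn0 addn1.
Qed.

Lemma split_norm1 (x : 'I_n -> nat) m : norm1 x <= m + m ->
  exists y z : 'I_n -> nat,
    [/\ x =1 (fun k => y k + z k), norm1 y <= m & norm1 z <= m].
Proof.
move=> xm; have [y yx ym] := sub_vector_norm1 (geq_minl (norm1 x) m).
exists y, (fun k => x k - y k); split=> [k||]; first by rewrite subnKC.
- by rewrite ym geq_minr.
- by rewrite /norm1 sumnB // -/(norm1 x) -/(norm1 y) ym leq_subLR addn_minl leq_min leq_addr.
Qed.

Lemma Ptab_ge_profit i j (x : 'I_n -> nat) :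
  weight w x <= j -> norm1 x <= 2 ^ i -> profit p x <= Ptab p w i j.
Proof.
move=> xw xn.
have x_small k : x k < (2 ^ i).+1.
  by rewrite ltnS (leq_trans _ xn) // /norm1 (bigD1 k) //= leq_addr.
pose f := [ffun k => inord (x k) : 'I_(2 ^ i).+1].
have [fw fn fp] : [/\ weight w (fun k => f k) = weight w x,
    norm1 (fun k => f k) = norm1 x & profit p (fun k => f k) = profit p x].
  by split; apply: eq_bigr => k _; rewrite ffunE inordK.
by rewrite -fp; apply: (leq_bigmax_cond f); rewrite fw fn xw xn.
Qed.

Lemma Ptab_attained i j : exists x : 'I_n -> nat,
  [/\ weight w x <= j, norm1 x <= 2 ^ i & Ptab p w i j = profit p x].
Proof.
pose feasible (x : {ffun 'I_n -> 'I_(2 ^ i).+1}) :=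
  (weight w (fun k => x k) <= j) && (norm1 (fun k => x k) <= 2 ^ i).
have : 0 < #|feasible|.
  apply/card_gt0P; exists [ffun => ord0].
  by rewrite unfold_in /feasible /weight /norm1 !big1 // => k _; rewrite ffunE ?muln0.
move=> /(eq_bigmax_cond (fun x : {ffun 'I_n -> 'I_(2 ^ i).+1} =>
                           profit p (fun k => x k)))[x].
rewrite unfold_in => /andP[xw xn] opt.
by exists (fun k => nat_of_ord (x k)); split; rewrite -?opt.
Qed.

Lemma PtabS_le_split i j :
  Ptab p w i.+1 j <= \max_(a < j.+1) (Ptab p w i a + Ptab p w i (j - a)).
Proof.
have [x [xw xn ->]] := Ptab_attained i.+1 j.
rewrite expnS mul2n -addnn in xn.
have [y [z [xyz yn zn]]] := split_norm1 xn.
have sum_xE (c : 'I_n -> nat) :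
    \sum_(k < n) c k * x k = \sum_(k < n) c k * y k + \sum_(k < n) c k * z k.
  by rewrite -big_split; apply: eq_bigr => k _; rewrite xyz mulnDr.
rewrite [profit _ _]sum_xE; rewrite [weight _ _]sum_xE in xw.
have yw : weight w y < j.+1 by rewrite ltnS (leq_trans (leq_addr _ _) xw).
apply: leq_trans (leq_bigmax (Ordinal yw)).
apply: leq_add; apply: Ptab_ge_profit => //=.
by rewrite leq_subRL // (leq_trans (leq_addr _ _) xw).
Qed.

Lemma Ptab_add_le i a b :
  Ptab p w i a + Ptab p w i b <= Ptab p w i.+1 (a + b).
Proof.
have [x [xw xn ->]] := Ptab_attained i a.
have [y [yw yn ->]] := Ptab_attained i b.
rewrite -profitD; apply: Ptab_ge_profit; first by rewrite weightD leq_add.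
by rewrite norm1D expnS mul2n -addnn leq_add.
Qed.

End Knapsack.

Theorem lemma5p1 (n : nat) (p w : 'I_n -> nat) (i W : nat) :
  1 <= i ->
  forall j, j <= W ->
    Ptab p w i j = \max_(a < j.+1) (Ptab p w i.-1 a + Ptab p w i.-1 (j - a)).
Proof.
case: i => // i _ j _ /=; apply/anti_leq/andP; split; first exact: PtabS_le_split.
apply/bigmax_leqP => a _.
by have := Ptab_add_le p w i a (j - a); rewrite subnKC // -ltnS.
Qed.
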